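(* In the model described in the context, there exist choices of the model primitives (group fractions $\lambda_0,\lambda_1$, densities $f_{e,s}$ satisfying the monotone likelihood ratio property, $v_q,v_u,\omega>0$, and $\underline c<\bar c$) for which there is an equilibrium under the color-blind policy, $(\tilde\theta_0,\tilde\theta_1,\pi_0,\pi_1)$ with $\tilde\theta_0=\tilde\theta_1$, such that $\pi_0\neq\pi_1$.
   Context: Two groups $s\in\{0,1\}$ with population fractions $\lambda_1\in(0,1)$, $\lambda_0=1-\lambda_1$. Each applicant draws a cost $c$ uniformly on $[\underline c,\bar c]$ and chooses effort $e\in\{q,u\}$. A classifier score $\theta\in\mathbb{R}$ has density $f_{e,s}$ and distribution function $F_{e,s}$ given effort $e$ and group $s$; monotone likelihood ratio property: $f_{q,s}(\theta)/f_{u,s}(\theta)$ strictly increasing in $\theta$ for each $s$. Firm gains $v_q>0$ per accepted qualified applicant and loses $v_u>0$ per accepted unqualified one; $r=v_q/v_u$; accepted applicants get $\omega>0$. Let $\tilde c_s(\theta)=\omega[F_{u,s}(\theta)-F_{q,s}(\theta)]$ and $G(c)=\min\!\left(1,\frac{c-\underline c}{\bar c-\underline c}\right)$. An equilibrium under the color-blind (CB) policy is a quadruple $(\tilde\theta_0,\tilde\theta_1,\pi_0,\pi_1)$ with $\tilde\theta:=\tilde\theta_0=\tilde\theta_1$, $\pi_s=G(\tilde c_s(\tilde\theta))$ for $s=0,1$, and $$\lambda_0\pi_0+\lambda_1\pi_1=\frac{\phi(\tilde\theta)}{r+\phi(\tilde\theta)},\qquad \phi(\theta)=\frac{\lambda_0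 f_{u,0}(\theta)+\lambda_1 f_{u,1}(\theta)}{\lambda_0 f_{q,0}(\theta)+\lambda_1 f_{q,1}(\theta)}.$$ *)

From Stdlib Require Import Reals.
From Coquelicot Require Import Coquelicot.
Open Scope R_scope.

(* Effort levels: q (qualified) and u (unqualified).  Groups s are [bool]
   (false = group 0, true = group 1). *)
Inductive effort := eq_ | eu.

(* f is a probability density on R with distribution function F:
   f >= 0 (here: f > 0, needed for the likelihood ratio to be defined),
   F theta = int_{-oo}^theta f, and int_{-oo}^{+oo} f = 1. *)
Definition is_density (f F : R -> R) : Prop :=
  (forall t, 0 < f t) /\
  (forall t, is_RInt_gen f (Rbar_locally m_infty) (at_point t) (F t)) /\
  is_RInt_gen f (Rbar_locally m_infty) (Rbar_locally p_infty) 1.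

Definition MLRP (fq fu : R -> R) : Prop :=
  forall t1 t2, t1 < t2 -> fq t1 / fu t1 < fq t2 / fu t2.

Definition ctilde (omega : R) (F : effort -> bool -> R -> R) (s : bool) (t : R) : R :=
  omega * (F eu s t - F eq_ s t).

Definition Gcost (cl ch c : R) : R := Rmin 1 ((c - cl) / (ch - cl)).

Definition phi (lam0 lam1 : R) (f : effort -> bool -> R -> R) (t : R) : R :=
  (lam0 * f eu false t + lam1 * f eu true t) /
  (lam0 * f eq_ false t + lam1 * f eq_ true t).

Definition CB_equilibrium (lam0 lam1 vq vu omega cl ch : R)
  (f F : effort -> bool -> R -> R) (th0 th1 pi0 pi1 : R) : Prop :=
  th0 = th1 /\
  pi0 = Gcost cl ch (ctilde omega F false th0) /\
  pi1 = Gcost cl ch (ctilde omega F true th1) /\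
  lam0 * pi0 + lam1 * pi1 =
    phi lam0 lam1 f th0 / (vq / vu + phi lam0 lam1 f th0).

From Stdlib Require Import Reals Lra Lia FunctionalExtensionality.
From Coquelicot Require Import Coquelicot.
Open Scope R_scope.

(* Let unqualified scores follow the logistic law L in both groups, and
   qualified scores follow L^2 in group 0 and L^3 in group 1 (the best of two,
   resp. three, logistic draws).  The likelihood ratios 2L and 3L^2 increase,
   so MLRP holds.  At the common threshold 0, L(0) = 1/2, so with omega = 1
   and costs uniform on [0, 1] the participation rates are
   1/2 - 1/4 <> 1/2 - 1/8.  With lambda_0 = lambda_1 = 1/2 one finds
   phi(0) = 8/7, and r = 88/35 is the ratio for which the firm's condition
   5/16 = phi(0) / (r + phi(0)) holds at 0. *)

Record smooth_cdf (f F : R -> R) : Prop := {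
  smooth_cdf_density_pos : forall t, 0 < f t;
  smooth_cdf_derive : forall t, is_derive F t (f t);
  smooth_cdf_density_cont : forall t, continuous f t;
  smooth_cdf_lim_m_infty : is_lim F m_infty 0;
  smooth_cdf_lim_p_infty : is_lim F p_infty 1
}.

Section SmoothCDF.

Variables f F : R -> R.
Hypothesis cdfF : smooth_cdf f F.

Lemma smooth_cdf_is_density : is_density f F.
Proof.
  destruct cdfF as [fpos Fder fcont Fm Fp].
  assert (DF : Derive F = f).
  { apply functional_extensionality; intro t. apply is_derive_unique, Fder. }
  assert (exF : forall x, ex_derive F x) by (intro; eexists; apply Fder).
  assert (contDF : forall x, continuous (Derive F) x) by (rewrite DF; exact fcont).
  split; [exact fpos | split; rewrite <- DF].
  - intro t. rewrite <- (Rminus_0_r (F t)).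
    apply is_RInt_gen_Derive; try (apply filter_forall; auto); try exact _; auto.
    intros P HP. apply (locally_singleton _ _ HP).
  - rewrite <- (Rminus_0_r 1).
    apply is_RInt_gen_Derive; try (apply filter_forall; auto); try exact _; auto.
Qed.

Lemma smooth_cdf_increasing t1 t2 : t1 < t2 -> F t1 < F t2.
Proof.
  intro lt12. apply (incr_function F m_infty p_infty f); try easy.
  - intros; apply (smooth_cdf_derive _ _ cdfF).
  - intros; apply (smooth_cdf_density_pos _ _ cdfF).
Qed.

Lemma smooth_cdf_pos t : 0 < F t.
Proof.
  assert (H0 : Rbar_le 0 (F (t - 1))).
  { apply (is_lim_le_loc F (fun _ => F (t - 1)) m_infty).
    - exists (t - 1); intros y Hy. left; apply smooth_cdf_increasing; exact Hy.
    - apply (smooth_cdf_lim_m_infty _ _ cdfF).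
    - apply is_lim_const. }
  simpl in H0. pose proof (smooth_cdf_increasing (t - 1) t ltac:(lra)). lra.
Qed.

Lemma smooth_cdf_pow n :
  smooth_cdf (fun t => INR (S n) * f t * F t ^ n) (fun t => F t ^ S n).
Proof.
  destruct cdfF as [fpos Fder fcont Fm Fp].
  assert (powC : forall m x, continuous (fun y => y ^ m) x).
  { intros; apply (ex_derive_continuous (K := R_AbsRing) (V := R_NormedModule)); auto_derive; exact I. }
  assert (FC : forall x, continuous F x).
  { intro; apply (ex_derive_continuous (K := R_AbsRing) (V := R_NormedModule)); eexists; apply Fder. }
  split.
  - intro t. pose proof (fpos t). pose proof (smooth_cdf_pos t).
    apply Rmult_lt_0_compat; [apply Rmult_lt_0_compat; auto; apply lt_0_INR; lia | apply pow_lt; auto].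
  - intro t. eapply is_derive_ext; [| apply is_derive_pow, Fder]. reflexivity.
  - intro t.
    apply (continuous_mult (K := R_AbsRing) (fun y => INR (S n) * f y) (fun y => F y ^ n)).
    + apply (continuous_mult (K := R_AbsRing) (fun _ => INR (S n)) f); auto using continuous_const.
    + apply (continuous_comp F (fun y => y ^ n)); auto.
  - pose proof (is_lim_comp_continuous F (fun y => y ^ S n) m_infty 0 Fm (powC _ _)) as H.
    cbv beta in H. rewrite pow_i in H by lia. exact H.
  - pose proof (is_lim_comp_continuous F (fun y => y ^ S n) p_infty 1 Fp (powC _ _)) as H.
    cbv beta in H. rewrite pow1 in H. exact H.
Qed.

End SmoothCDF.

Lemma MLRP_pow_density f F n : smooth_cdf f F ->
  MLRP (fun t => INR (S (S n)) * f t * F t ^ S n) f.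
Proof.
  intros cdfF t1 t2 lt12.
  pose proof (smooth_cdf_density_pos _ _ cdfF t1). pose proof (smooth_cdf_density_pos _ _ cdfF t2).
  replace (INR (S (S n)) * f t1 * F t1 ^ S n / f t1) with (INR (S (S n)) * F t1 ^ S n) by (field; lra).
  replace (INR (S (S n)) * f t2 * F t2 ^ S n / f t2) with (INR (S (S n)) * F t2 ^ S n) by (field; lra).
  apply Rmult_lt_compat_l; [apply lt_0_INR; lia |].
  exact (smooth_cdf_increasing _ _ (smooth_cdf_pow f F cdfF n) t1 t2 lt12).
Qed.

Definition logistic (t : R) : R := exp t / (1 + exp t).

Definition logistic_density (t : R) : R := exp t / (1 + exp t) ^ 2.

Lemma logistic_as_complement t : logistic t = 1 - / (1 + exp t).
Proof. unfold logistic. pose proof (exp_pos t). field. lra. Qed.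

Lemma smooth_cdf_logistic : smooth_cdf logistic_density logistic.
Proof.
  assert (den_pos : forall t, 0 < 1 + exp t) by (intro t; pose proof (exp_pos t); lra).
  split.
  - intro t. unfold logistic_density. pose proof (exp_pos t); pose proof (den_pos t).
    apply Rdiv_lt_0_compat; [lra | apply pow_lt; lra].
  - intro t. unfold logistic, logistic_density. pose proof (den_pos t).
    auto_derive; [lra | field; lra].
  - intro t. apply (ex_derive_continuous (K := R_AbsRing) (V := R_NormedModule)).
    unfold logistic_density. pose proof (den_pos t). auto_derive. nra.
  - apply (is_lim_ext (fun t => exp t * / (1 + exp t))); [reflexivity |].
    replace (Finite 0) with (Rbar_mult 0 (/ (1 + 0))) by (simpl; f_equal; ring).
    apply is_lim_mult; [apply is_lim_exp_m | | exact I].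
    apply (is_lim_inv _ _ (1 + 0)); [| simpl; intro E; injection E; lra].
    apply (is_lim_plus _ _ _ 1 0); [apply is_lim_const | apply is_lim_exp_m | reflexivity].
  - apply (is_lim_ext (fun t => 1 - / (1 + exp t))); [intro; symmetry; apply logistic_as_complement |].
    replace (Finite 1) with (Rbar_minus 1 0) by (simpl; f_equal; ring).
    apply (is_lim_minus _ _ _ 1 0); [apply is_lim_const | | reflexivity].
    replace (Finite 0) with (Rbar_inv p_infty) by reflexivity.
    apply (is_lim_inv _ _ p_infty); [| discriminate].
    apply (is_lim_plus _ _ _ 1 p_infty); [apply is_lim_const | apply is_lim_exp_p | reflexivity].
Qed.

Lemma logistic_0 : logistic 0 = 1 / 2.
Proof. unfold logistic. rewrite exp_0. field. Qed.

Lemma logistic_density_0 : logistic_density 0 = 1 / 4.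
Proof. unfold logistic_density. rewrite exp_0. field. Qed.

Lemma Gcost_linear cl ch c : cl < ch -> c <= ch -> Gcost cl ch c = (c - cl) / (ch - cl).
Proof.
  intros lt_cl_ch le_c_ch. unfold Gcost. apply Rmin_right.
  apply (Rmult_le_reg_r (ch - cl)); [lra |].
  unfold Rdiv. rewrite Rmult_assoc, Rinv_l by lra. lra.
Qed.

Definition model_cdf (e : effort) (s : bool) : R -> R :=
  match e with
  | eu => logistic
  | eq_ => fun t => logistic t ^ S (S (Nat.b2n s))
  end.

Definition model_density (e : effort) (s : bool) : R -> R :=
  match e with
  | eu => logistic_density
  | eq_ => fun t => INR (S (S (Nat.b2n s))) * logistic_density t * logistic t ^ S (Nat.b2n s)
  end.

Theorem proposition2 :
  exists (lam0 lam1 vq vu omega cl ch : R) (f F : effort -> bool -> R -> R),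
    0 < lam1 < 1 /\ lam0 = 1 - lam1 /\
    (forall e s, is_density (f e s) (F e s)) /\
    (forall s, MLRP (f eq_ s) (f eu s)) /\
    0 < vq /\ 0 < vu /\ 0 < omega /\ cl < ch /\
    exists th0 th1 pi0 pi1 : R,
      CB_equilibrium lam0 lam1 vq vu omega cl ch f F th0 th1 pi0 pi1 /\
      pi0 <> pi1.
Proof.
  exists (1 / 2), (1 / 2), (88 / 35), 1, 1, 0, 1, model_density, model_cdf.
  do 2 (split; [lra |]).
  split; [intros [|] s; apply smooth_cdf_is_density; [apply smooth_cdf_pow |];
          apply smooth_cdf_logistic |].
  split; [intro s; apply MLRP_pow_density, smooth_cdf_logistic |].
  do 4 (split; [lra |]).
  exists 0, 0, (1 / 4), (3 / 8).
  unfold CB_equilibrium, ctilde, phi; simpl.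
  rewrite logistic_0, logistic_density_0, !Gcost_linear by lra.
  repeat split; try lra; field.
Qed.
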